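(* Let $\mathcal{H}_T=\mathbb{C}^2$, let $\mathcal{H}_E$ be a finite-dimensional Hilbert space with $\dim\mathcal{H}_E\ge 2$ containing two fixed orthonormal vectors $\ket{0}_E,\ket{1}_E$, let $\ket{\chi}\in\mathcal{H}_E$ be a unit vector, let $\mathcal{B}=\{\ket{v_0},\ket{v_1}\}$ be an arbitrary orthonormal basis of $\mathcal{H}_T$, and let $U_F,U_R$ be unitary operators on $\mathcal{H}_T\otimes\mathcal{H}_E$ (a collective attack $(U_F,U_R)$). Then there exists a restricted attack $(q_0,q_1,\eta_0,\eta_1,U)$ with respect to $\mathcal{B}$, with associated forward isometry $\mathcal{F}$, such that the following holds. For every finite-dimensional Hilbert space $\mathcal{H}_A$ (Alice's private system), every unit vector $\ket{\psi}\in\mathcal{H}_A\otimes\mathcal{H}_T$, and each of Bob's two operations $O\in\{I,\ \mathrm{CNOT}\}$ acting on $\mathcal{H}_T\otimes\mathcal{H}_B$ (where $\mathcal{H}_B=\mathbb{C}^2$ is Bob's register, initialized to $\ket{0}_B$, $I$ is the identity (''Reflect'') and $\mathrm{CNOT}\ket{t}_T\ket{b}_B=\ket{t}_T\ket{b\oplus t}_B$ models ''Measure and Resend''), we have \[ (I_{AB}\otimes U)\,(O\otimes I_E)\,(I_A\otimes\mathcal{F})\ket{\psi}\ket{0}_B =(I_{AB}\otimes U_R)\,(O\otimes I_E)\,(I_A\otimes U_F)\big(\ket{\psi}\otimes\ket{\chi}_E\big)\ket{0}_B , \] (with each operator acting on the indicated tensor factors). Consequently, for any (pure or mixed) input, the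 joint final state of Alice, Bob and Eve is identical under the collective attack $(U_F,U_R)$ and the restricted attack; in particular Alice and Bob cannot distinguish the two attacks, Eve's final system is the same, and the Devetak–Winter key-rate $S(A|E)-H(A|B)$ is the same under both.
   Context: Semi-quantum setting: each round Alice sends a qubit (system $T$) to Bob through a forward channel; Bob either reflects it (identity) or measures it in the computational basis $\{\ket 0,\ket 1\}$ and resends the observed state, which is modeled as a CNOT from $T$ into his private register $B$; the qubit then returns to Alice through a reverse channel. A collective attack is a pair of unitaries $(U_F,U_R)$ on $\mathcal{H}_T\otimes\mathcal{H}_E$: Eve's ancilla starts in $\ket{\chi}_E$, $U_F$ is applied in the forward channel and $U_R$ in the reverse channel. $\mathbb{D}=\{z\in\mathbb{C}:|z|\le1\}$. A restricted attack with respect to an orthonormal basis $\{\ket{v_0},\ket{v_1}\}$ of $\mathcal{H}_T$ is a tuple $(q_0,q_1,\eta_0,\eta_1,U)$ with $q_0,q_1\in[0,1]$, $\eta_0,\eta_1\in\mathbb{D}$ satisfying $q_0\eta_1\sqrt{1-q_1^2}+q_1\overline{\eta_0}\sqrt{1-q_0^2}=0$, and $U$ a unitary on $\mathcal{H}_T\otimes\mathcal{H}_E$. Its forward operation is the linear map $\mathcal{F}:\mathcal{H}_T\to\mathcal{H}_T\otimes\mathcal{H}_E$ defined by $\mathcal{F}\ket{v_0}=q_0\ket{0}_T\ket{0}_E+\sqrt{1-q_0^2}\ket{1}_T\ket{e}_E$ and $\mathcal{F}\ket{v_1}=\sqrt{1-q_1^2}\ket{0}_T\ket{f}_E+q_1\ket{1}_T\ket{0}_E$,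 where $\ket{e}=\eta_0\ket{0}_E+\sqrt{1-|\eta_0|^2}\ket{1}_E$ and $\ket{f}=\eta_1\ket{0}_E+\sqrt{1-|\eta_1|^2}\ket{1}_E$ (the constraint makes $\mathcal{F}$ an isometry); in the reverse channel Eve applies $U$. *)

(* Scalars: an arbitrary numClosedFieldType C (e.g. algC;
   the complex numbers are the paper's instance).  Finite-dimensional Hilbert
   spaces are C^X for a finite index type X; vectors are functions X -> C,
   operators are kernels X -> X -> C (out-index first). *)
From HB Require Import structures.
From mathcomp Require Import all_boot all_order all_algebra.
Set Implicit Arguments. Unset Strict Implicit. Unset Printing Implicit Defensive.
Import Order.TTheory GRing.Theory Num.Theory.
Local Open Scope ring_scope.

Section QDefs.
Variable C : numClosedFieldType.

Definition dotv (X : finType) (u v : X -> C) : C := \sum_x (u x)^* * v x.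

Definition unit_vec (X : finType) (u : X -> C) : Prop := dotv u u = 1.

Definition orthonormal2 (X : finType) (u0 u1 : X -> C) : Prop :=
  [/\ dotv u0 u0 = 1, dotv u1 u1 = 1 & dotv u0 u1 = 0].

Definition unitary (X : finType) (M : X -> X -> C) : Prop :=
  (forall x y, \sum_z (M z x)^* * M z y = (x == y)%:R) /\
  (forall x y, \sum_z M x z * (M y z)^* = (x == y)%:R).

Definition TE (n : nat) : finType := ('I_2 * 'I_n)%type.

Definition in_disk (z : C) : bool := `|z| <= 1.

Definition restricted_attack (n : nat) (q0 q1 eta0 eta1 : C)
    (U : TE n -> TE n -> C) : Prop :=
  [/\ (0 <= q0 <= 1) && (0 <= q1 <= 1), in_disk eta0 && in_disk eta1,
      q0 * eta1 * sqrtC (1 - q1 ^+ 2) + q1 * eta0^* * sqrtC (1 - q0 ^+ 2) = 0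
    & unitary U].

Definition ket_e (n : nat) (e0 e1 : 'I_n -> C) (eta : C) : 'I_n -> C :=
  fun k => eta * e0 k + sqrtC (1 - `|eta| ^+ 2) * e1 k.

(* F|v_i>, as an amplitude function on T x E *)
Definition fwd_basis (n : nat) (e0 e1 : 'I_n -> C) (q0 q1 eta0 eta1 : C)
    (i : 'I_2) (te : TE n) : C :=
  let t := te.1 in let k := te.2 in
  if i == 0 :> nat then
    (if t == 0 :> nat then q0 * e0 k
     else sqrtC (1 - q0 ^+ 2) * ket_e e0 e1 eta0 k)
  else
    (if t == 0 :> nat then sqrtC (1 - q1 ^+ 2) * ket_e e0 e1 eta1 k
     else q1 * e0 k).

(* (I_A (x) F) applied to psi in H_A (x) H_T, with F the linear map determined
   by F|v_i> := fwd_basis i for the orthonormal basis v_0, v_1: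
   F x = sum_i <v_i|x> F|v_i>. *)
Definition fwd_restricted (m n : nat) (v : 'I_2 -> 'I_2 -> C)
    (e0 e1 : 'I_n -> C) (q0 q1 eta0 eta1 : C) (psi : 'I_m -> 'I_2 -> C)
    (a : 'I_m) (te : TE n) : C :=
  \sum_(i < 2) dotv (v i) (psi a) * fwd_basis e0 e1 q0 q1 eta0 eta1 i te.

Definition fwd_collective (m n : nat) (UF : TE n -> TE n -> C)
    (chi : 'I_n -> C) (psi : 'I_m -> 'I_2 -> C) (a : 'I_m) (te : TE n) : C :=
  \sum_(te' : TE n) UF te te' * (psi a te'.1 * chi te'.2).

Inductive bob_op := Reflect | MeasureResend.

Definition xor2 (b t : 'I_2) : 'I_2 := inord ((b + t) %% 2).

(* matrix kernel of O on T x B : ((t',b'),(t,b)) *)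
Definition bob_mx (O : bob_op) (out inp : 'I_2 * 'I_2) : C :=
  match O with
  | Reflect => ((out.1 == inp.1) && (out.2 == inp.2))%:R
  | MeasureResend => ((out.1 == inp.1) && (out.2 == xor2 inp.2 inp.1))%:R
  end.

(* (O (x) I_E) applied to phi (x) |0>_B, phi in A (x) T (x) E;
   result indexed by (a, b, (t,e)) *)
Definition bob_step (m n : nat) (O : bob_op) (phi : 'I_m -> TE n -> C)
    (a : 'I_m) (b : 'I_2) (te : TE n) : C :=
  \sum_(t1 < 2) \sum_(b1 < 2)
     bob_mx O (te.1, b) (t1, b1) * ((b1 == 0 :> nat)%:R * phi a (t1, te.2)).

Definition eve_step (m n : nat) (U : TE n -> TE n -> C)
    (Phi : 'I_m -> 'I_2 -> TE n -> C) (a : 'I_m) (b : 'I_2) (te : TE n) : C :=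
  \sum_(te' : TE n) U te te' * Phi a b te'.

End QDefs.

From HB Require Import structures.
From mathcomp Require Import all_boot all_order all_algebra ring.
Import Order.TTheory GRing.Theory Num.Theory.
Set Implicit Arguments. Unset Strict Implicit. Unset Printing Implicit Defensive.
Local Open Scope ring_scope.

(* Write U_F (|v_i> |chi>) = |0>|a_i> + |1>|b_i>.  Unitarity of U_F makes these
   two states orthonormal, which is all that relates the pairs (a_0, a_1) and
   (b_0, b_1).  The parameters of the restricted attack are read off their Gram
   matrices (q_0 = |a_0|, q_1 = |b_1|, <a_0, a_1> = q_0 |a_1| eta_1,
   <b_1, b_0> = q_1 |b_0| eta_0), so that on each branch T = t the restricted
   forward map F|v_i> has components with the same Gram matrix as the collective
   one; pairs of vectors with equal Gram matrices are related by a unitary (a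
   product of two Householder reflections), giving W_0, W_1 on H_E with
   (sum_t |t><t| (x) W_t) F = U_F (. (x) chi).  Bob's operation preserves the
   computational basis of T and acts only on B, so it commutes with this
   T-controlled unitary, and U := U_R (sum_t |t><t| (x) W_t) does the job. *)

Section InnerProduct.
Variables (C : numClosedFieldType) (X : finType).
Implicit Types (u w x y : X -> C).

Lemma sum_delta (x : X) (F : X -> C) : \sum_z (z == x)%:R * F z = F x.
Proof.
rewrite (bigD1 x) //= eqxx mul1r big1 ?addr0 // => z /negbTE ->; exact: mul0r.
Qed.

Lemma sum_delta_sym (x : X) (F : X -> C) : \sum_z (x == z)%:R * F z = F x.
Proof. by rewrite -[RHS](sum_delta x); apply: eq_bigr => z _; rewrite eq_sym. Qed.

Lemma dotv_conj u w : (dotv u w)^* = dotv w u.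
Proof.
by rewrite rmorph_sum; apply: eq_bigr => k _; rewrite rmorphM /= conjCK mulrC.
Qed.

Lemma dotvZ (a b : C) u w :
  dotv (fun k => a * u k) (fun k => b * w k) = a^* * b * dotv u w.
Proof.
rewrite /dotv mulr_sumr; apply: eq_bigr => k _; rewrite rmorphM /=; ring.
Qed.

Lemma dotv_lincombr (c d : C) s u w :
  dotv s (fun k => c * u k + d * w k) = c * dotv s u + d * dotv s w.
Proof.
rewrite /dotv !mulr_sumr -big_split /=; apply: eq_bigr => k _; ring.
Qed.

Lemma dotv_lincomb (a b c d : C) u w s t :
  dotv (fun k => a * u k + b * w k) (fun k => c * s k + d * t k)
  = a^* * c * dotv u s + a^* * d * dotv u t
  + b^* * c * dotv w s + b^* * d * dotv w t.
Proof.
rewrite /dotv !mulr_sumr -!big_split /=; apply: eq_bigr => k _.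
rewrite rmorphD !rmorphM /=; ring.
Qed.

Lemma dotvBl u w s : dotv (fun k => u k - w k) s = dotv u s - dotv w s.
Proof.
by rewrite /dotv -sumrB; apply: eq_bigr => k _; rewrite rmorphB /= mulrBl.
Qed.

Lemma dotvBr s u w : dotv s (fun k => u k - w k) = dotv s u - dotv s w.
Proof. by rewrite /dotv -sumrB; apply: eq_bigr => k _; rewrite mulrBr. Qed.

Lemma dotv_ge0 u : 0 <= dotv u u.
Proof. by apply: sumr_ge0 => k _; rewrite -normCKC exprn_ge0. Qed.

Lemma dotv_self_eq0 u : dotv u u = 0 -> forall k, u k = 0.
Proof.
move=> /eqP; rewrite psumr_eq0 => [/allP uu0 k|k _]; last first.
  by rewrite -normCKC exprn_ge0.
have /implyP := uu0 k (mem_index_enum k).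
by rewrite -normCKC expf_eq0 normr_eq0 => /(_ isT) /eqP.
Qed.

Lemma cauchy_schwarz x y : `|dotv x y| ^+ 2 <= dotv x x * dotv y y.
Proof.
have [x0|xn0] := eqVneq (dotv x x) 0.
  have -> : dotv x y = 0.
    by apply: big1 => k _; rewrite (dotv_self_eq0 x0) conjC0 mul0r.
  by rewrite x0 normr0 expr0n mul0r.
set a := dotv x x; set d := dotv x y.
have a_gt0 : 0 < a by rewrite lt_def xn0 dotv_ge0.
have ca : a^* = a by apply/geC0_conj/ltW.
(* the squared norm of [a y - d x] is [a (a |y|^2 - |d|^2)] *)
have := dotv_ge0 (fun k => a * y k + (- d) * x k).
rewrite dotv_lincomb -(dotv_conj x y) -/d -/a ca rmorphN /=.
have -> : a * a * dotv y y + a * - d * d^* + - d^* * a * d + - d^* * - d * a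
          = a * (a * dotv y y - d * d^*) by ring.
by rewrite pmulr_rge0 // subr_ge0 normCK.
Qed.

Lemma exists_disk_ratio (p d : C) :
  0 <= p -> `|d| ^+ 2 <= p ^+ 2 -> exists2 eta, in_disk eta & p * eta = d.
Proof.
move=> p_ge0 dp; have [p0|pn0] := eqVneq p 0.
  move: dp; rewrite p0 expr0n /= => d_le0.
  have /eqP : `|d| ^+ 2 = 0 by apply/eqP; rewrite eq_le d_le0 exprn_ge0.
  rewrite expf_eq0 /= normr_eq0 => /eqP ->.
  by exists 0; rewrite ?mulr0 // /in_disk normr0 ler01.
have p_gt0 : 0 < p by rewrite lt_def pn0 p_ge0.
exists (d / p); last by rewrite mulrC divfK.
rewrite /in_disk normf_div (ger0_norm p_ge0) ler_pdivrMr // mul1r.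
by rewrite -(ler_pXn2r (n := 2)) // nnegrE ?normr_ge0.
Qed.

End InnerProduct.

Section Operators.
Variables (C : numClosedFieldType) (X : finType).
Implicit Types (u w x y : X -> C) (M N : X -> X -> C).

Definition op_app M x : X -> C := fun j => \sum_k M j k * x k.
Definition op_comp M N : X -> X -> C := fun j k => \sum_l M j l * N l k.
Definition adj M : X -> X -> C := fun j k => (M k j)^*.

Definition isometric M : Prop :=
  forall j k : X, \sum_z (M z j)^* * M z k = (j == k)%:R.

Lemma op_app_ext M x y : x =1 y -> op_app M x =1 op_app M y.
Proof. by move=> xy j; apply: eq_bigr => k _; rewrite xy. Qed.

Lemma op_app_comp M N x j : op_app (op_comp M N) x j = op_app M (op_app N x) j.
Proof.
rewrite /op_app; under eq_bigr => k _ do rewrite mulr_suml.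
rewrite exchange_big /=; apply: eq_bigr => l _; rewrite mulr_sumr.
by apply: eq_bigr => k _; rewrite mulrA.
Qed.

Lemma isometric_dotv M x y :
  isometric M -> dotv (op_app M x) (op_app M y) = dotv x y.
Proof.
move=> isoM; rewrite /dotv /op_app.
transitivity (\sum_k \sum_l (x k)^* * y l * \sum_z (M z k)^* * M z l).
  under eq_bigr => z _ do rewrite rmorph_sum mulr_suml.
  rewrite exchange_big; apply: eq_bigr => k _.
  under eq_bigr => z _ do rewrite mulr_sumr.
  rewrite exchange_big; apply: eq_bigr => l _; rewrite mulr_sumr.
  by apply: eq_bigr => z _; rewrite rmorphM /=; ring.
apply: eq_bigr => k _; under eq_bigr => l _ do rewrite isoM mulrC.
by rewrite sum_delta_sym.
Qed.

Lemma isometric_comp M N : isometric M -> isometric N -> isometric (op_comp M N).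
Proof.
move=> isoM isoN j k.
exact: etrans (isometric_dotv (fun l => N l j) (fun l => N l k) isoM) (isoN j k).
Qed.

Lemma isometric_ext M N : M =2 N -> isometric M -> isometric N.
Proof.
by move=> MN isoM j k; rewrite -isoM; apply: eq_bigr => z _; rewrite !MN.
Qed.

Lemma adj_comp M N : adj (op_comp M N) =2 op_comp (adj N) (adj M).
Proof.
move=> j k; rewrite /adj rmorph_sum; apply: eq_bigr => l _.
by rewrite rmorphM mulrC.
Qed.

Lemma unitaryE M : unitary M <-> isometric M /\ isometric (adj M).
Proof.
split=> -[isoM coisoM]; split=> // j k; rewrite -coisoM;
  by apply: eq_bigr => z _; rewrite /adj conjCK.
Qed.

Lemma unitary_dotv M x y : unitary M -> dotv (op_app M x) (op_app M y) = dotv x y.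
Proof. by move=> /unitaryE[isoM _]; apply: isometric_dotv. Qed.

Lemma unitary_comp M N : unitary M -> unitary N -> unitary (op_comp M N).
Proof.
move=> /unitaryE[isoM coisoM] /unitaryE[isoN coisoN]; apply/unitaryE; split.
  exact: isometric_comp.
by apply: isometric_ext (isometric_comp coisoN coisoM) => j k; rewrite adj_comp.
Qed.

Definition reflector (c : C) w : X -> X -> C :=
  fun j k => (j == k)%:R - c * w j * (w k)^*.

Lemma op_app_reflector c w x j :
  op_app (reflector c w) x j = x j - c * w j * dotv w x.
Proof.
rewrite /op_app /dotv; under eq_bigr => k _ do rewrite mulrBl.
rewrite sumrB sum_delta_sym mulr_sumr; congr (_ - _).
by apply: eq_bigr => k _; rewrite mulrA.
Qed.

Lemma adj_reflector c w : adj (reflector c w) =2 reflector c^* w.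
Proof.
by move=> j k; rewrite /adj /reflector rmorphB !rmorphM /= conjC_nat conjCK eq_sym; ring.
Qed.

Lemma isometric_reflector c w :
  c + c^* = c * c^* * dotv w w -> isometric (reflector c w).
Proof.
move=> hc j k; rewrite /reflector.
transitivity (\sum_z ((z == j)%:R * (z == k)%:R - (z == j)%:R * (c * w z * (w k)^*)
    - (z == k)%:R * (c^* * (w z)^* * w j)
    + c * c^* * w j * (w k)^* * ((w z)^* * w z))).
  by apply: eq_bigr => z _; rewrite rmorphB !rmorphM /= conjC_nat conjCK; ring.
rewrite !big_split /= !sumrN !sum_delta -mulr_sumr -/(dotv w w).
have -> : c * c^* * w j * (w k)^* * dotv w w = (c + c^*) * w j * (w k)^*.
  by rewrite hc; ring.
ring.
Qed.

Lemma unitary_reflector c w :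
  c + c^* = c * c^* * dotv w w -> unitary (reflector c w).
Proof.
move=> hc; apply/unitaryE; split; first exact: isometric_reflector.
apply: isometric_ext (isometric_reflector _) => [j k|]; first by rewrite adj_reflector.
by rewrite conjCK addrC [c^* * c]mulrC.
Qed.

Lemma exists_unitary_map x y : dotv x x = dotv y y ->
  exists M, [/\ unitary M, op_app M x =1 y &
    forall u, dotv (fun k => x k - y k) u = 0 -> op_app M u =1 u].
Proof.
move=> xy; set w := fun k => x k - y k; set d := dotv w x.
have ww : dotv w w = d + d^*.
  rewrite /d /w !dotvBl !dotvBr rmorphB /= !dotv_conj -xy; ring.
(* c = 1 / <x - y, x>; if that vanishes then x = y and c = 0 gives the identity *)
pose c := if d == 0 then 0 else d^-1.
exists (reflector c w); split.
- apply: unitary_reflector; rewrite /c; case: eqP => [_|/eqP d_neq0].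
    by rewrite rmorph0 mulr0 mul0r addr0.
  have cd_neq0 : d^* != 0 by rewrite conjC_eq0.
  by rewrite ww fmorphV /=; field; apply/andP.
- move=> j; rewrite op_app_reflector -/d /c; case: eqP => [d0|/eqP d_neq0].
    have /dotv_self_eq0/(_ j)/eqP : dotv w w = 0 by rewrite ww d0 rmorph0 addr0.
    by rewrite subr_eq0 => /eqP ->; rewrite !mul0r subr0.
  by rewrite /w; field.
- by move=> u wu j; rewrite op_app_reflector wu mulr0 subr0.
Qed.

Lemma exists_unitary_map2 x0 x1 y0 y1 :
  dotv x0 x0 = dotv y0 y0 -> dotv x1 x1 = dotv y1 y1 -> dotv x0 x1 = dotv y0 y1 ->
  exists M, [/\ unitary M, op_app M x0 =1 y0 & op_app M x1 =1 y1].
Proof.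
move=> h00 h11 h01.
have [M1 [uM1 M1x0 _]] := exists_unitary_map h00.
set z := op_app M1 x1.
have hz : dotv z z = dotv y1 y1 by rewrite unitary_dotv.
have [M2 [uM2 M2z M2fix]] := exists_unitary_map hz.
(* M2 fixes y0 because [<z - y1, y0> = <x1, x0> - <y1, y0> = 0] *)
have zy0 : dotv z y0 = dotv x1 x0.
  by rewrite -(unitary_dotv x1 x0 uM1); apply: eq_bigr => k _; rewrite M1x0.
exists (op_comp M2 M1); split.
- exact: unitary_comp.
- move=> j; rewrite op_app_comp (op_app_ext _ M1x0); apply: M2fix.
  by rewrite dotvBl zy0 -dotv_conj h01 dotv_conj subrr.
- by move=> j; rewrite op_app_comp M2z.
Qed.

End Operators.

Section Controlled.
Variables (C : numClosedFieldType) (I X : finType).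
Implicit Types (W : I -> X -> X -> C).

Lemma sum_pair (F : I * X -> C) : \sum_p F p = \sum_i \sum_k F (i, k).
Proof. by rewrite pair_bigA; apply: eq_bigr => -[]. Qed.

Lemma dotv_tensor (f f' : I -> C) (g g' : X -> C) :
  dotv (fun p : I * X => f p.1 * g p.2) (fun p => f' p.1 * g' p.2)
  = dotv f f' * dotv g g'.
Proof.
rewrite /dotv sum_pair mulr_suml; apply: eq_bigr => i _.
by rewrite mulr_sumr; apply: eq_bigr => k _; rewrite rmorphM /=; ring.
Qed.

Definition ctrl_op W : I * X -> I * X -> C :=
  fun p p' => (p.1 == p'.1)%:R * W p.1 p.2 p'.2.

Lemma op_app_ctrl W f i k :
  op_app (ctrl_op W) f (i, k) = op_app (W i) (fun k' => f (i, k')) k.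
Proof.
rewrite /op_app sum_pair.
transitivity (\sum_i' (i == i')%:R * \sum_k' W i' k k' * f (i', k')).
  apply: eq_bigr => i' _; rewrite mulr_sumr.
  apply: eq_bigr => k' _; rewrite /ctrl_op /=.
  by case: eqP => [->|_]; rewrite ?mul0r // mulrA.
exact: sum_delta_sym.
Qed.

Lemma adj_ctrl W : adj (ctrl_op W) =2 ctrl_op (fun i => adj (W i)).
Proof.
move=> [i k] [i' k']; rewrite /adj /ctrl_op /= rmorphM /= conjC_nat eq_sym.
by case: eqP => [->|]; rewrite ?mul0r.
Qed.

Lemma isometric_ctrl W : (forall i, isometric (W i)) -> isometric (ctrl_op W).
Proof.
move=> isoW [i k] [i' k']; rewrite sum_pair.
transitivity (\sum_t (t == i)%:R * ((t == i')%:R * \sum_l (W t l k)^* * W t l k')).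
  apply: eq_bigr => t _; rewrite !mulr_sumr; apply: eq_bigr => l _.
  by rewrite /ctrl_op rmorphM /= conjC_nat; ring.
by rewrite sum_delta isoW xpair_eqE -mulnb natrM.
Qed.

Lemma unitary_ctrl W : (forall i, unitary (W i)) -> unitary (ctrl_op W).
Proof.
move=> uW; apply/unitaryE; split.
  by apply: isometric_ctrl => i; have /unitaryE[] := uW i.
apply: isometric_ext (isometric_ctrl (W := fun i => adj (W i)) _) => [p p'|i].
  by rewrite adj_ctrl.
by have /unitaryE[] := uW i.
Qed.

End Controlled.

Section Bob.
Variables (C : numClosedFieldType) (m n : nat).

Definition bob_amp (O : bob_op) (b t : 'I_2) : C :=
  \sum_(b1 < 2) bob_mx C O (t, b) (t, b1) * (b1 == 0 :> nat)%:R.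

Lemma bob_stepE O (phi : 'I_m -> TE n -> C) a b t k :
  bob_step O phi a b (t, k) = bob_amp O b t * phi a (t, k).
Proof.
rewrite /bob_step (bigD1 t) //= [X in _ + X]big1 ?addr0; last first.
  move=> t' /negbTE t't; apply: big1 => b1 _.
  by case: O; rewrite /= eq_sym t't mul0r.
by rewrite /bob_amp mulr_suml; apply: eq_bigr => b1 _; rewrite mulrA.
Qed.

Lemma ctrl_op_bob_step (W : 'I_2 -> 'I_n -> 'I_n -> C) O
    (phi : 'I_m -> TE n -> C) a b te :
  op_app (ctrl_op W) (bob_step O phi a b) te
  = bob_step O (fun a => op_app (ctrl_op W) (phi a)) a b te.
Proof.
case: te => t k; rewrite bob_stepE !op_app_ctrl /op_app mulr_sumr.
by apply: eq_bigr => k' _; rewrite bob_stepE; ring.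
Qed.

End Bob.

Section Forward.
Variables (C : numClosedFieldType) (m n : nat).
Implicit Types (v : 'I_2 -> 'I_2 -> C) (psi : 'I_m -> 'I_2 -> C).

Lemma ord2_cases (i : 'I_2) : i = 0 \/ i = 1.
Proof. by case: i => [[|[|]]] //= lt_i2; [left|right]; apply: val_inj. Qed.

Lemma sum_ord2 (F : 'I_2 -> C) : \sum_(i < 2) F i = F 0 + F 1.
Proof. by rewrite big_ord_recl big_ord1; congr (F _ + F _); apply: val_inj. Qed.

Lemma dotv_TE (f g : TE n -> C) :
  dotv f g = dotv (fun k => f (0, k)) (fun k => g (0, k))
           + dotv (fun k => f (1, k)) (fun k => g (1, k)).
Proof. by rewrite /dotv sum_pair sum_ord2. Qed.

Lemma orthonormal2_expand v :
  orthonormal2 (v 0) (v 1) ->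
  forall (psi : 'I_2 -> C) t, psi t = \sum_(i < 2) dotv (v i) psi * v i t.
Proof.
case=> v00 v11 v01 psi t.
(* [A *m B = 1] is orthonormality of the v_i; its finite-dimensional consequence
   [B *m A = 1] is completeness. *)
pose A : 'M[C]_2 := \matrix_(i, s) (v i s)^*.
pose B : 'M[C]_2 := \matrix_(s, i) v i s.
have AB1 : A *m B = 1%:M.
  apply/matrixP => i j; rewrite !mxE.
  have -> : \sum_s A i s * B s j = dotv (v i) (v j) by apply: eq_bigr => s _; rewrite !mxE.
  have [->|->] := ord2_cases i; have [->|->] := ord2_cases j => //=.
  by rewrite -dotv_conj v01 conjC0.
transitivity (\sum_s psi s * (B *m A) t s).
  by rewrite (mulmx1C AB1) -[LHS](sum_delta_sym t); apply: eq_bigr => s _; rewrite !mxE mulrC.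
rewrite /dotv; under [RHS]eq_bigr => i _ do rewrite big_distrl.
rewrite exchange_big /=; apply: eq_bigr => s _; rewrite !mxE mulr_sumr.
by apply: eq_bigr => i _; rewrite !mxE; ring.
Qed.

Lemma op_app_fwd_restricted v (M : TE n -> TE n -> C) e0 e1 q0 q1 eta0 eta1 psi a te :
  op_app M (fwd_restricted v e0 e1 q0 q1 eta0 eta1 psi a) te
  = \sum_(i < 2) dotv (v i) (psi a) * op_app M (fwd_basis e0 e1 q0 q1 eta0 eta1 i) te.
Proof.
rewrite /op_app; under eq_bigr => p _ do rewrite mulr_sumr.
rewrite exchange_big; apply: eq_bigr => i _ /=; rewrite mulr_sumr.
by apply: eq_bigr => p _; ring.
Qed.

Lemma fwd_collective_expand v (UF : TE n -> TE n -> C) chi psi a te :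
  orthonormal2 (v 0) (v 1) ->
  fwd_collective UF chi psi a te
  = \sum_(i < 2) dotv (v i) (psi a) * op_app UF (fun p => v i p.1 * chi p.2) te.
Proof.
move=> onv; rewrite /fwd_collective /op_app.
under [RHS]eq_bigr => i _ do rewrite mulr_sumr.
rewrite exchange_big; apply: eq_bigr => p _ /=.
rewrite (orthonormal2_expand onv (psi a) p.1) mulr_suml mulr_sumr.
by apply: eq_bigr => i _; ring.
Qed.

End Forward.

Section Restricted.
Variables (C : numClosedFieldType) (n : nat) (e0 e1 : 'I_n -> C).
Hypothesis on_e : orthonormal2 e0 e1.

Lemma dotv_e0_ket_e eta : dotv e0 (ket_e e0 e1 eta) = eta.
Proof. by case: on_e => e00 _ e01; rewrite dotv_lincombr e00 e01 mulr1 mulr0 addr0. Qed.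

Lemma dotv_ket_e eta : in_disk eta -> dotv (ket_e e0 e1 eta) (ket_e e0 e1 eta) = 1.
Proof.
move=> eta_le1; case: on_e => e00 e11 e01.
have e10 : dotv e1 e0 = 0 by rewrite -dotv_conj e01 conjC0.
have r_ge0 : 0 <= sqrtC (1 - `|eta| ^+ 2).
  by rewrite sqrtC_ge0 subr_ge0 expr_le1 ?normr_ge0.
rewrite dotv_lincomb e00 e11 e01 e10 (geC0_conj r_ge0) -expr2 sqrtCK -normCKC; ring.
Qed.

Lemma exists_unitary_e0_ket (y0 y1 : 'I_n -> C) :
  exists eta (W : 'I_n -> 'I_n -> C),
    [/\ in_disk eta, dotv y0 y1 = sqrtC (dotv y0 y0) * sqrtC (dotv y1 y1) * eta,
       unitary W, op_app W (fun k => sqrtC (dotv y0 y0) * e0 k) =1 y0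
     & op_app W (fun k => sqrtC (dotv y1 y1) * ket_e e0 e1 eta k) =1 y1].
Proof.
case: (on_e) => e00 _ _.
set p0 := sqrtC (dotv y0 y0); set p1 := sqrtC (dotv y1 y1).
have p0_ge0 : 0 <= p0 by rewrite sqrtC_ge0 dotv_ge0.
have p1_ge0 : 0 <= p1 by rewrite sqrtC_ge0 dotv_ge0.
have p0_sq : p0 ^+ 2 = dotv y0 y0 by rewrite sqrtCK.
have p1_sq : p1 ^+ 2 = dotv y1 y1 by rewrite sqrtCK.
have [eta eta_le1 y01] : exists2 eta, in_disk eta & p0 * p1 * eta = dotv y0 y1.
  by apply: exists_disk_ratio; rewrite ?mulr_ge0 // exprMn p0_sq p1_sq cauchy_schwarz.
have x00 : dotv (fun k => p0 * e0 k) (fun k => p0 * e0 k) = dotv y0 y0.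
  by rewrite dotvZ (geC0_conj p0_ge0) e00 mulr1 -expr2.
have x11 : dotv (fun k => p1 * ket_e e0 e1 eta k) (fun k => p1 * ket_e e0 e1 eta k)
           = dotv y1 y1.
  by rewrite dotvZ (geC0_conj p1_ge0) dotv_ket_e // mulr1 -expr2.
have x01 : dotv (fun k => p0 * e0 k) (fun k => p1 * ket_e e0 e1 eta k) = dotv y0 y1.
  by rewrite dotvZ (geC0_conj p0_ge0) dotv_e0_ket_e.
have [W [uW Wy0 Wy1]] := exists_unitary_map2 x00 x11 x01.
by exists eta, W.
Qed.

Lemma restricted_forward_of_orthonormal (G : 'I_2 -> TE n -> C) :
  orthonormal2 (G 0) (G 1) ->
  exists q0 q1 eta0 eta1 (W : 'I_2 -> 'I_n -> 'I_n -> C),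
    restricted_attack q0 q1 eta0 eta1 (ctrl_op W) /\
    forall i te, op_app (ctrl_op W) (fwd_basis e0 e1 q0 q1 eta0 eta1 i) te = G i te.
Proof.
case=> G00 G11 G01.
pose a i k := G i (0, k); pose b i k := G i (1, k).
have [eta1 [W0 [eta1_le1 a01 uW0 W0a0 W0a1]]] := exists_unitary_e0_ket (a 0) (a 1).
have [eta0 [W1 [eta0_le1 b10 uW1 W1b1 W1b0]]] := exists_unitary_e0_ket (b 1) (b 0).
set q0 := sqrtC (dotv (a 0) (a 0)) in a01 W0a0 *.
set s1 := sqrtC (dotv (a 1) (a 1)) in a01 W0a1 *.
set q1 := sqrtC (dotv (b 1) (b 1)) in b10 W1b1 *.
set s0 := sqrtC (dotv (b 0) (b 0)) in b10 W1b0 *.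
have s0E : sqrtC (1 - q0 ^+ 2) = s0 by rewrite sqrtCK -G00 dotv_TE addrAC subrr add0r.
have s1E : sqrtC (1 - q1 ^+ 2) = s1 by rewrite sqrtCK -G11 dotv_TE addrK.
have [q0_ge0 q1_ge0 s0_ge0 s1_ge0] : [/\ 0 <= q0, 0 <= q1, 0 <= s0 & 0 <= s1].
  by split; rewrite sqrtC_ge0 dotv_ge0.
exists q0, q1, eta0, eta1, (fun t : 'I_2 => if t == 0 then W0 else W1); split.
  split.
  - have le1 (q r : C) : 0 <= q -> 0 <= r -> sqrtC (1 - q ^+ 2) = r -> q <= 1.
      move=> q_ge0 r_ge0 rE; rewrite -(expr_le1 (n := 2) _ q_ge0) //.
      by rewrite -subr_ge0 -[1 - _]sqrtCK rE exprn_ge0.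
    by rewrite q0_ge0 q1_ge0 (le1 q0 s0) ?(le1 q1 s1).
  - by rewrite eta0_le1 eta1_le1.
  - rewrite s0E s1E; transitivity (dotv (a 0) (a 1) + (dotv (b 1) (b 0))^*).
      by rewrite a01 b10 !rmorphM /= (geC0_conj q1_ge0) (geC0_conj s0_ge0); ring.
    by rewrite dotv_conj -dotv_TE.
  - by apply: unitary_ctrl => t; case: ifP.
move=> i [t k]; rewrite op_app_ctrl.
have [->|->] := ord2_cases i; have [->|->] := ord2_cases t => /=.
- by rewrite -[RHS]/(a 0 k) -W0a0; apply: op_app_ext.
- by rewrite -[RHS]/(b 0 k) -W1b0; apply: op_app_ext => k'; rewrite /fwd_basis /= s0E.
- by rewrite -[RHS]/(a 1 k) -W0a1; apply: op_app_ext => k'; rewrite /fwd_basis /= s1E.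
- by rewrite -[RHS]/(b 1 k) -W1b1; apply: op_app_ext.
Qed.

End Restricted.

Theorem theorem1 (C : numClosedFieldType) (n : nat) (hn : (2 <= n)%N)
  (e0 e1 : 'I_n -> C) (he : orthonormal2 e0 e1)
  (chi : 'I_n -> C) (hchi : unit_vec chi)
  (v : 'I_2 -> 'I_2 -> C) (hv : orthonormal2 (v 0) (v 1))
  (UF UR : TE n -> TE n -> C) (hUF : unitary UF) (hUR : unitary UR) :
  exists (q0 q1 eta0 eta1 : C) (U : TE n -> TE n -> C),
    restricted_attack q0 q1 eta0 eta1 U /\
    forall (m : nat) (psi : 'I_m -> 'I_2 -> C),
      unit_vec (fun x : 'I_m * 'I_2 => psi x.1 x.2) ->
      forall (O : bob_op) (a : 'I_m) (b : 'I_2) (te : TE n),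
        eve_step U (bob_step O (fwd_restricted v e0 e1 q0 q1 eta0 eta1 psi)) a b te
        = eve_step UR (bob_step O (fwd_collective UF chi psi)) a b te.
Proof.
(* The identity is linear in psi. *)
pose G i := op_app UF (fun p : TE n => v i p.1 * chi p.2).
have onG : orthonormal2 (G 0) (G 1).
  have dotG i j : dotv (G i) (G j) = dotv (v i) (v j).
    by rewrite unitary_dotv // dotv_tensor hchi mulr1.
  by case: hv => v00 v11 v01; split; rewrite dotG.
have [q0 [q1 [eta0 [eta1 [W [[q_bnd eta_bnd hq uW] WG]]]]]] :=
  restricted_forward_of_orthonormal he onG.
exists q0, q1, eta0, eta1, (op_comp UR (ctrl_op W)); split.
  by split=> //; apply: unitary_comp.
move=> m psi _ O a b te.
rewrite /eve_step -/(op_app _ _ te) -/(op_app UR _ te) op_app_comp.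
apply: op_app_ext => -[t k]; rewrite ctrl_op_bob_step !bob_stepE.
rewrite op_app_fwd_restricted (fwd_collective_expand (v := v)) //.
by congr (_ * _); apply: eq_bigr => i _; rewrite WG.
Qed.
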